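(* The sequence $(m_n)_{n\ge1}$ is strictly increasing. Consequently, if $T_1$ and $T_2$ are minimal trees, then $I(T_1)<I(T_2)$ if and only if $|T_1|<|T_2|$.
   Context: A rooted tree $T$ is a finite tree with a distinguished vertex, its root; its order $|T|$ is its number of vertices. For vertices $u,v$, the infimum of $u$ and $v$ is the vertex common to the path from $u$ to the root and the path from $v$ to the root that is furthest from the root. A set $X\subseteq V(T)$ is infima closed if the infimum of any two elements of $X$ lies in $X$. $I(T)$ denotes the number of nonempty infima closed subsets of $V(T)$. For $n\ge1$, $m_n=\min\{I(T): T \text{ a rooted tree with } n \text{ vertices}\}$; a rooted tree $T$ with $I(T)=m_{|T|}$ is called minimal. *)

From mathcomp Require Import all_boot.
From Stdlib Require Import ClassicalEpsilon.
Set Implicit Arguments. Unset Strict Implicit. Unset Printing Implicit Defensive.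

Inductive rtree := Node of seq rtree.

(* Vertices of a rooted tree, represented by their addresses: the sequence of
   child indices along the path from the root.  The root is [::].
   Addresses are pairwise distinct. *)
Fixpoint verts (t : rtree) : seq (seq nat) :=
  let: Node cs := t in
  [::] :: (fix vs (i : nat) (cs : seq rtree) : seq (seq nat) :=
             match cs with
             | [::] => [::]
             | c :: cs' => map (cons i) (verts c) ++ vs i.+1 cs'
             end) 0 cs.

Definition nverts (t : rtree) : nat := size (verts t).

(* Infimum of two vertices: the deepest common vertex of their root paths,
   i.e. the longest common prefix of their addresses. *)
Fixpoint inf (u v : seq nat) : seq nat :=
  match u, v with
  | a :: u', b :: v' => if a == b then a :: inf u' v' else [::]
  | _, _ => [::]
  end.

Definition vtx (t : rtree) (i : 'I_(nverts t)) : seq nat := nth [::] (verts t) i.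

Definition inf_closed (t : rtree) (X : {set 'I_(nverts t)}) : bool :=
  [forall i in X, forall j in X, exists k in X, vtx k == inf (vtx i) (vtx j)].

Definition Icl (t : rtree) : nat :=
  #|[set X : {set 'I_(nverts t)} | (X != set0) && inf_closed X]|.

Definition pb (P : Prop) : bool :=
  if excluded_middle_informative P then true else false.

Fixpoint chain (n : nat) : rtree :=
  match n with 0 => Node [::] | k.+1 => Node [:: chain k] end.

Lemma order_chain n : nverts (chain n) = n.+1.
Proof.
elim: n => [|n IH] //=.
rewrite /nverts /= cats0 size_map.
by rewrite /nverts in IH; rewrite IH.
Qed.

Lemma m_ex (n : nat) :
  exists k, pb (exists t, nverts t = n.+1 /\ Icl t = k).
Proof.
exists (Icl (chain n)); rewrite /pb.
case: excluded_middle_informative => // [[]].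
by exists (chain n); rewrite order_chain.
Qed.

(* m_n = min { I(T) : |T| = n }, for n >= 1 (m_0 := 0, unused). *)
Definition m (n : nat) : nat :=
  match n with 0 => 0 | n'.+1 => ex_minn (m_ex n') end.

Definition minimal (t : rtree) : Prop := Icl t = m (nverts t).

From mathcomp Require Import all_boot.
From Stdlib Require Import ClassicalEpsilon.
Set Implicit Arguments. Unset Strict Implicit. Unset Printing Implicit Defensive.

(* Call a map f on vertex addresses an
   infimum embedding of t' into t if f preserves infima and sends the vertices
   of t' injectively into those of t (as a subsequence of the vertex list).
   1. Such an embedding maps infima closed sets of t' to infima closed sets of
      t injectively; if t has more vertices than t', some vertex x of t is
      missed, and the infima closed singleton {x} is not an image.  Hence
      I(t') < I(t).
   2. Every tree with at least two vertices has a leaf; deleting it gives a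
      tree t' with |t'| + 1 = |t| that embeds in t (we delete the leftmost
      leaf, reached by following first children).
   3. Applying 2 to a tree t of order n + 1 with I(t) = m_(n+1), and 1 to the
      resulting embedding, gives m_n <= I(t') < I(t) = m_(n+1).
   The statement about minimal trees follows because a strictly increasing
   sequence of naturals is an order embedding. *)

Fixpoint child_verts (i : nat) (cs : seq rtree) : seq (seq nat) :=
  if cs is c :: cs' then map (cons i) (verts c) ++ child_verts i.+1 cs' else [::].

Lemma vertsE cs : verts (Node cs) = [::] :: child_verts 0 cs.
Proof. by []. Qed.

Definition all_trees (P : rtree -> Prop) (cs : seq rtree) : Prop :=
  foldr (fun c A => P c /\ A) True cs.

Fixpoint rtree_ind_all (P : rtree -> Prop)
    (H : forall cs, all_trees P cs -> P (Node cs)) (t : rtree) : P t :=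
  let: Node cs := t in
  H cs ((fix F cs : all_trees P cs :=
           if cs is c :: cs' return all_trees P cs
           then conj (rtree_ind_all H c) (F cs') else I) cs).

Lemma child_verts_head i cs w :
  w \in child_verts i cs -> exists j w', w = j :: w' /\ i <= j.
Proof.
elim: cs i => //= c cs IH i; rewrite mem_cat.
case/orP => [/mapP [w' _ ->] | /IH [j [w' [-> le_ij]]]]; first by exists i, w'.
by exists j, w'; split => //; apply: ltnW.
Qed.

Lemma verts_uniq t : uniq (verts t).
Proof.
have uniq_children i cs : all_trees (fun c => uniq (verts c)) cs ->
    uniq (child_verts i cs).
  elim: cs i => //= c cs IH i [uniq_c uniq_cs].
  rewrite cat_uniq map_inj_uniq ?uniq_c ?IH //= ?andbT; last by move=> x y [].
  apply/hasPn => w /child_verts_head [j [w' [-> lt_ij]]].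
  by apply/mapP => -[x _ [eq_ji _]]; rewrite eq_ji ltnn in lt_ij.
elim/rtree_ind_all: t => cs IHcs; rewrite vertsE /= uniq_children // andbT.
by apply/negP => /child_verts_head [j [w' [] ]].
Qed.

Definition shift (w : seq nat) : seq nat :=
  if w is a :: w' then a.+1 :: w' else [::].

Lemma map_shift i cs : map shift (child_verts i cs) = child_verts i.+1 cs.
Proof. by elim: cs i => //= c cs IH i; rewrite map_cat IH -map_comp. Qed.

Lemma nverts_gt0 t : 0 < nverts t.
Proof. by case: t. Qed.

Lemma nverts_cons c cs : nverts (Node (c :: cs)) = nverts c + nverts (Node cs).
Proof.
rewrite /nverts !vertsE /= size_cat size_map -addSnnS.
by rewrite -(map_shift 0) size_map.
Qed.

Definition inf_embedding (f : seq nat -> seq nat) (t' t : rtree) : Prop :=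
  {morph f : u v / inf u v} /\ subseq (map f (verts t')) (verts t).

Lemma embed_drop_first_leaf cs :
  inf_embedding shift (Node cs) (Node (Node [::] :: cs)).
Proof.
split; first by case=> [|a u] [|b v] //=; rewrite eqSS; case: ifP.
by rewrite !vertsE /= map_shift; apply: subseq_cons.
Qed.

Definition lift_first (f : seq nat -> seq nat) (w : seq nat) : seq nat :=
  if w is 0 :: w' then 0 :: f w' else w.

Lemma embed_first_child f c' c cs : inf_embedding f c' c ->
  inf_embedding (lift_first f) (Node (c' :: cs)) (Node (c :: cs)).
Proof.
move=> [f_inf f_sub]; split.
  by case=> [|[|a] u] [|[|b] v] //=; rewrite ?f_inf //; case: ifP.
rewrite !vertsE /= !map_cat -map_comp cat_subseq //.
  by rewrite (eq_map (_ : lift_first f \o cons 0 =1 cons 0 \o f)) // map_comp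
     map_subseq.
rewrite map_id_in // => w /child_verts_head [j [w' [-> lt0j]]].
by case: j lt0j.
Qed.

Lemma leaf_deletion t : 1 < nverts t ->
  exists t' f, (nverts t').+1 = nverts t /\ inf_embedding f t' t.
Proof.
elim/rtree_ind_all: t => -[|c cs] // [IHc _] _.
case: c IHc => -[|d ds] IHc.
  exists (Node cs), shift; split; last exact: embed_drop_first_leaf.
  by rewrite nverts_cons.
have [|c' [f [size_c' emb_c']]] := IHc.
  by rewrite nverts_cons -addn1 leq_add ?nverts_gt0.
exists (Node (c' :: cs)), (lift_first f); split; last exact: embed_first_child.
by rewrite nverts_cons [in RHS]nverts_cons -size_c'.
Qed.

Lemma inf_id u : inf u u = u.
Proof. by elim: u => //= a u ->; rewrite eqxx. Qed.

Lemma inf_closed_set1 t (x : 'I_(nverts t)) : inf_closed [set x].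
Proof.
apply/forallP => i; apply/implyP; rewrite inE => /eqP ->.
apply/forallP => j; apply/implyP; rewrite inE => /eqP ->.
by apply/exists_inP; exists x; rewrite ?inE // inf_id.
Qed.

Section Embedding.
Variables (f : seq nat -> seq nat) (t' t : rtree).
Hypothesis emb : inf_embedding f t' t.

Lemma embedding_index_map : exists g : 'I_(nverts t') -> 'I_(nverts t),
  injective g /\ forall i, vtx (g i) = f (vtx i).
Proof.
have [_ f_sub] := emb.
have f_uniq : uniq (map f (verts t')) := subseq_uniq f_sub (verts_uniq t).
have f_mem (i : 'I_(nverts t')) : f (vtx i) \in verts t.
  by apply: (mem_subseq f_sub); apply/map_f/mem_nth.
pose g i : 'I_(nverts t) := Ordinal (etrans (index_mem _ _) (f_mem i)).
have g_vtx i : vtx (g i) = f (vtx i) by rewrite /vtx /= nth_index.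
exists g; split=> // i j /(congr1 (@vtx t)); rewrite !g_vtx /vtx.
rewrite -!(nth_map [::] [::] f) // => eq_ij; apply: val_inj.
by apply/eqP; rewrite -(nth_uniq [::] _ _ f_uniq) ?size_map ?ltn_ord // eq_ij.
Qed.

Lemma inf_closed_imset (g : 'I_(nverts t') -> 'I_(nverts t)) :
  (forall i, vtx (g i) = f (vtx i)) ->
  forall X, inf_closed X -> inf_closed (g @: X).
Proof.
have [f_inf _] := emb; move=> g_vtx X /forallP X_closed.
apply/forall_inP => _ /imsetP [a Xa ->].
apply/forall_inP => _ /imsetP [b Xb ->].
move: (X_closed a); rewrite Xa => /forall_inP /(_ b Xb) /exists_inP [k Xk].
move=> /eqP eq_k; apply/exists_inP; exists (g k); first exact: imset_f.
by rewrite !g_vtx eq_k f_inf.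
Qed.

Lemma Icl_embedding_lt : nverts t' < nverts t -> Icl t' < Icl t.
Proof.
move=> lt_t't; have [g [g_inj g_vtx]] := embedding_index_map.
have /properP [_ [x _ g'x]] : g @: setT \proper [set: 'I_(nverts t)].
  by rewrite properEcard subsetT card_imset // !cardsT !card_ord.
rewrite /Icl -(card_imset _ (imset_inj g_inj)); apply: proper_card.
apply/properP; split.
  apply/subsetP => Y /imsetP [X]; rewrite !inE => /andP [X0 X_closed] ->.
  by rewrite imset_eq0 X0 inf_closed_imset.
exists [set x].
  by rewrite inE inf_closed_set1 andbT; apply/set0Pn; exists x; rewrite inE.
apply/imsetP => -[X _ set1_x]; have : x \in g @: X by rewrite -set1_x set11.
by case/imsetP => a _ x_ga; rewrite x_ga imset_f ?inE in g'x.
Qed.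

End Embedding.

Lemma pb_true (P : Prop) : pb P = true <-> P.
Proof. by rewrite /pb; case: excluded_middle_informative. Qed.

Lemma m_le n t : nverts t = n.+1 -> m n.+1 <= Icl t.
Proof.
by move=> size_t /=; case: ex_minnP => k _; apply; apply/pb_true; exists t.
Qed.

Lemma m_attained n : exists t, nverts t = n.+1 /\ Icl t = m n.+1.
Proof. by rewrite /=; case: ex_minnP => k /pb_true. Qed.

(* Step 3: deleting a leaf of a minimal tree of order n + 2. *)
Lemma m_step n : m n.+1 < m n.+2.
Proof.
have [t [size_t Icl_t]] := m_attained n.+1.
have [|t' [f [size_t' emb]]] := @leaf_deletion t; first by rewrite size_t.
have size_t'n : nverts t' = n.+1 by apply: succn_inj; rewrite size_t' size_t.
by rewrite -Icl_t (leq_trans _ (Icl_embedding_lt emb _)) ?ltnS ?m_le -?size_t'.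
Qed.

Lemma m_mono : {mono (fun n => m n.+1) : a b / a < b}.
Proof. exact/leqW_mono/leq_mono/(homo_ltn ltn_trans m_step). Qed.

Theorem lemma2p2 :
  (forall n : nat, 1 <= n -> m n < m n.+1) /\
  (forall T1 T2 : rtree, minimal T1 -> minimal T2 ->
     (Icl T1 < Icl T2 <-> nverts T1 < nverts T2)).
Proof.
split; first by case=> // n _; apply: m_step.
move=> T1 T2; rewrite /minimal => -> ->.
rewrite -(prednK (nverts_gt0 T1)) -(prednK (nverts_gt0 T2)).
by rewrite (m_mono (nverts T1).-1) ltnS.
Qed.
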